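(* Let $\varphi_0\in\mathbb{R}$ and let $v$ be a smooth function with $v(\varphi)>0$ and $v'(\varphi)>0$ for all $\varphi\ge\varphi_0$. Let $h_1,h_2$ be two solutions of $h'=\sqrt{h^2-v}$ in the region $\{(\varphi,h):\varphi\ge\varphi_0,\ h>\sqrt{v(\varphi)}\}$ with $h_2(\varphi_0)>h_1(\varphi_0)$, and set $\mathfrak{h}_i(\varphi)=h_i(\varphi)/\sqrt{v(\varphi)}$, $i=1,2$. Then, for all $\varphi$ at which both are defined, $$\mathfrak{h}_2(\varphi)>\mathfrak{h}_1(\varphi)\quad(\varphi\ge\varphi_0),$$ and $$\frac{\mathfrak{h}_2(\varphi)}{\mathfrak{h}_1(\varphi)}>\frac{\mathfrak{h}_2(\varphi')}{\mathfrak{h}_1(\varphi')}\quad\text{for all }\varphi>\varphi'>\varphi_0.$$ *)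

From Stdlib Require Import Reals Lra.
From Coquelicot Require Import Coquelicot.
Open Scope R_scope.

Definition smooth (v : R -> R) : Prop := forall (n : nat) (x : R), ex_derive_n v n x.

Definition ode_solution (v : R -> R) (phi0 : R) (b : Rbar) (h : R -> R) : Prop :=
  Rbar_lt (Finite phi0) b /\
  (forall phi, phi0 <= phi -> Rbar_lt (Finite phi) b -> h phi > sqrt (v phi)) /\
  filterlim h (at_right phi0) (locally (h phi0)) /\
  (forall phi, phi0 < phi -> Rbar_lt (Finite phi) b ->
     is_derive h phi (sqrt (h phi ^ 2 - v phi))).

Definition normalized (v h : R -> R) (phi : R) : R := h phi / sqrt (v phi).

(* The normalisation cancels in the quotient: [normalized v h2 / normalized v h1 = h2 / h1],
   and [normalized v h1 < normalized v h2] iff [h1 < h2].  The difference [h2 - h1] starts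
   positive and has derivative [sqrt (h2^2 - v) - sqrt (h1^2 - v)], which is nonnegative as
   long as [h2 > h1]; a first-exit argument keeps it positive.  Finally
   [(h2 / h1)' = (h1 sqrt (h2^2 - v) - h2 sqrt (h1^2 - v)) / h1^2], whose numerator is
   positive because squaring turns its sign into that of [(h2^2 - h1^2) v]. *)

From Stdlib Require Import Reals Lra.
From Coquelicot Require Import Coquelicot.
Open Scope R_scope.

Lemma filterlim_gt0 {T : Type} (F : (T -> Prop) -> Prop) (f : T -> R) (l : R) :
  filterlim f F (locally l) -> 0 < l -> F (fun x => 0 < f x).
Proof. intros Hf Hl. apply Hf, (open_gt 0), Hl. Qed.

Lemma Rle_Rbar_lt_trans (x y : R) (B : Rbar) :
  x <= y -> Rbar_lt y B -> Rbar_lt x B.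
Proof. intros Hxy HyB. now apply Rbar_le_lt_trans with y. Qed.

Section FirstExit.

Variables (d d' : R -> R) (a : R) (B : Rbar).
Hypothesis d_a_gt0 : 0 < d a.
Hypothesis d_gt0_at_right : at_right a (fun x => 0 < d x).
Hypothesis d_derive : forall x, a < x -> Rbar_lt x B -> is_derive d x (d' x).
Hypothesis d'_ge0 : forall x, a < x -> Rbar_lt x B -> 0 < d x -> 0 <= d' x.

Lemma gt0_right_endpoint (s : R) :
  a < s -> Rbar_lt s B -> (forall y, a <= y < s -> 0 < d y) -> 0 < d s.
Proof.
  intros Has HsB Hbelow.
  set (m := (a + s) / 2).
  destruct (MVT_cor2 d d' m s) as [c [Hmvt Hc]]; [unfold m; lra | |].
  - intros c Hc. apply is_derive_Reals, d_derive.
    + unfold m in Hc; lra.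
    + apply Rle_Rbar_lt_trans with s; [lra | exact HsB].
  - assert (0 < d m) by (apply Hbelow; unfold m; lra).
    assert (0 <= d' c).
    { apply d'_ge0; [unfold m in Hc; lra | | apply Hbelow; unfold m in Hc; lra].
      apply Rle_Rbar_lt_trans with s; [lra | exact HsB]. }
    assert (0 <= d' c * (s - m)) by (apply Rmult_le_pos; unfold m in *; lra).
    lra.
Qed.

Lemma gt0_near (s : R) :
  a <= s -> Rbar_lt s B -> 0 < d s -> locally s (fun y => a < y -> 0 < d y).
Proof.
  intros Has HsB Hds.
  destruct (Req_dec a s) as [<- | Has']; [exact d_gt0_at_right |].
  apply filter_imp with (fun y => 0 < d y); [auto |].
  apply (filterlim_gt0 _ d (d s)); [| exact Hds].
  apply (@ex_derive_continuous R_AbsRing R_NormedModule).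
  exists (d' s). apply d_derive; [lra | exact HsB].
Qed.

Lemma gt0_on_interval (p : R) : a <= p -> Rbar_lt p B -> 0 < d p.
Proof.
  intros Hap HpB.
  set (E := fun x => x <= p /\ forall y, a <= y <= x -> 0 < d y).
  assert (E_ub : bound E) by (exists p; intros x [Hx _]; exact Hx).
  assert (E_a : E a) by (split; [lra | intros y Hy; replace y with a by lra; exact d_a_gt0]).
  destruct (completeness E E_ub (ex_intro _ a E_a)) as [s [Hub Hlub]].
  assert (Hsp : s <= p) by (apply Hlub; intros x [Hx _]; exact Hx).
  assert (HsB : Rbar_lt s B) by (now apply Rle_Rbar_lt_trans with p).
  assert (Has : a <= s) by (apply Hub, E_a).
  assert (Hbelow : forall y, a <= y < s -> 0 < d y).
  { intros y Hy. destruct (Rlt_dec 0 (d y)) as [| Hy0]; [assumption |].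
    assert (s <= y); [| lra].
    apply Hlub. intros x [_ Hx]. destruct (Rle_dec x y); [assumption |].
    exfalso. apply Hy0, Hx. lra. }
  assert (Hds : 0 < d s).
  { destruct (Req_dec a s) as [<- | Hne]; [exact d_a_gt0 |].
    apply gt0_right_endpoint; [lra | exact HsB | exact Hbelow]. }
  destruct (Req_dec s p) as [<- | Hne]; [exact Hds |].
  destruct (gt0_near s Has HsB Hds) as [g Hg].
  set (q := Rmin p (s + g / 2)).
  assert (Hq : s < q) by (apply Rmin_glb_lt; pose proof (cond_pos g); lra).
  assert (Hqg : q <= s + g / 2) by apply Rmin_r.
  assert (E q).
  { split; [apply Rmin_l |].
    intros y Hy. destruct (Rlt_dec y s); [apply Hbelow; lra |].
    destruct (Req_dec y a) as [-> | Hya]; [exact d_a_gt0 |].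
    apply Hg; [| lra]. change (Rabs (y - s) < g).
    pose proof (cond_pos g). apply Rabs_def1; lra. }
  assert (q <= s) by (apply Hub; assumption).
  lra.
Qed.

End FirstExit.

Lemma lt_sqr_of_sqrt_lt (x h : R) : sqrt x < h -> x < h ^ 2.
Proof.
  intros Hxh. apply sqrt_lt_0_alt.
  rewrite sqrt_pow2; [exact Hxh |].
  pose proof (sqrt_pos x). lra.
Qed.

Lemma mul_sqrt_sub_lt (v x y : R) :
  0 < v -> 0 < x < y -> v <= x ^ 2 -> y * sqrt (x ^ 2 - v) < x * sqrt (y ^ 2 - v).
Proof.
  intros Hv Hxy Hvx.
  assert (x ^ 2 * v < y ^ 2 * v) by (apply Rmult_lt_compat_r; nra).
  rewrite <- (sqrt_pow2 y) at 1 by lra. rewrite <- (sqrt_pow2 x) at 2 by lra.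
  rewrite <- !sqrt_mult_alt by nra.
  apply sqrt_lt_1_alt. split; nra.
Qed.

Lemma ode_solution_gt0 (v h : R -> R) (phi0 : R) (B : Rbar) :
  ode_solution v phi0 B h ->
  forall phi, phi0 <= phi -> Rbar_lt phi B -> 0 < h phi /\ v phi < h phi ^ 2.
Proof.
  intros [_ [Hgt _]] phi Hphi HphiB. specialize (Hgt phi Hphi HphiB).
  pose proof (sqrt_pos (v phi)).
  split; [lra | now apply lt_sqr_of_sqrt_lt].
Qed.

Section TwoSolutions.

Variables (v h1 h2 : R -> R) (phi0 : R) (B : Rbar).
Hypotheses (Hh1 : ode_solution v phi0 B h1) (Hh2 : ode_solution v phi0 B h2).

Lemma ode_solution_comparison : h1 phi0 < h2 phi0 ->
  forall phi, phi0 <= phi -> Rbar_lt phi B -> h1 phi < h2 phi.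
Proof.
  destruct Hh1 as [_ [_ [C1 D1]]]. destruct Hh2 as [_ [_ [C2 D2]]].
  intros H0 phi Hphi HphiB.
  cut (0 < h2 phi - h1 phi); [lra |].
  apply (gt0_on_interval (fun x => h2 x - h1 x)
           (fun x => sqrt (h2 x ^ 2 - v x) - sqrt (h1 x ^ 2 - v x)) phi0 B);
    [lra | | | | exact Hphi | exact HphiB].
  - set (c := (h1 phi0 + h2 phi0) / 2).
    apply filter_imp with (fun x => h1 x < c /\ c < h2 x); [intros x Hx; lra |].
    apply filter_and;
      [apply (C1 (fun y => y < c)), open_lt | apply (C2 (fun y => c < y)), open_gt];
      unfold c; lra.
  - intros x Hx HxB. exact (is_derive_minus h2 h1 x _ _ (D2 x Hx HxB) (D1 x Hx HxB)).
  - intros x Hx HxB Hd.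
    destruct (ode_solution_gt0 _ _ _ _ Hh1 x) as [Hpos _]; [lra | exact HxB |].
    cut (sqrt (h1 x ^ 2 - v x) <= sqrt (h2 x ^ 2 - v x)); [lra |].
    apply sqrt_le_1_alt. nra.
Qed.

Lemma ode_solution_ratio_increasing :
  (forall phi, phi0 < phi -> Rbar_lt phi B -> 0 < v phi) ->
  (forall phi, phi0 < phi -> Rbar_lt phi B -> h1 phi < h2 phi) ->
  forall x y, phi0 < x -> x < y -> Rbar_lt y B -> h2 x / h1 x < h2 y / h1 y.
Proof.
  destruct Hh1 as [_ [_ [_ D1]]]. destruct Hh2 as [_ [_ [_ D2]]].
  intros Hv Hlt x y Hx Hxy HyB.
  apply (incr_function (fun z => h2 z / h1 z) phi0 B
    (fun z => (sqrt (h2 z ^ 2 - v z) * h1 z - h2 z * sqrt (h1 z ^ 2 - v z)) / h1 z ^ 2));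
    try assumption.
  - intros z Hz HzB. simpl in Hz.
    destruct (ode_solution_gt0 _ _ _ _ Hh1 z) as [Hpos _]; [lra | exact HzB |].
    apply is_derive_div; [apply D2 | apply D1 | lra]; assumption.
  - intros z Hz HzB. simpl in Hz.
    destruct (ode_solution_gt0 _ _ _ _ Hh1 z) as [Hpos Hvz]; [lra | exact HzB |].
    apply Rdiv_lt_0_compat; [| nra].
    cut (h2 z * sqrt (h1 z ^ 2 - v z) < h1 z * sqrt (h2 z ^ 2 - v z)); [lra |].
    apply mul_sqrt_sub_lt; [apply Hv | split | lra]; auto.
Qed.

End TwoSolutions.

Lemma ode_solution_restrict (v h : R -> R) (phi0 : R) (b B : Rbar) :
  ode_solution v phi0 b h -> Rbar_lt phi0 B -> Rbar_le B b -> ode_solution v phi0 B h.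
Proof.
  intros [_ [Hgt [Hcont Hder]]] H0B HBb.
  split; [exact H0B |].
  split; [| split; [exact Hcont |]]; intros phi Hphi HphiB.
  - apply Hgt; [exact Hphi | now apply Rbar_lt_le_trans with B].
  - apply Hder; [exact Hphi | now apply Rbar_lt_le_trans with B].
Qed.

Lemma normalized_lt (v h1 h2 : R -> R) (phi : R) :
  0 < v phi -> h1 phi < h2 phi -> normalized v h1 phi < normalized v h2 phi.
Proof.
  intros Hv Hlt. unfold normalized.
  apply Rmult_lt_compat_r; [apply Rinv_0_lt_compat, sqrt_lt_R0 |]; assumption.
Qed.

Lemma normalized_div (v h1 h2 : R -> R) (phi : R) :
  0 < v phi -> h1 phi <> 0 -> normalized v h2 phi / normalized v h1 phi = h2 phi / h1 phi.
Proof.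
  intros Hv Hh1. unfold normalized.
  pose proof (sqrt_lt_R0 _ Hv). field. split; lra.
Qed.

Theorem proposition4 (phi0 : R) (v : R -> R) (h1 h2 : R -> R) (b1 b2 : Rbar)
  (Hsmooth : smooth v)
  (Hvpos : forall phi, phi0 <= phi -> v phi > 0)
  (Hdvpos : forall phi, phi0 <= phi -> Derive v phi > 0)
  (Hh1 : ode_solution v phi0 b1 h1)
  (Hh2 : ode_solution v phi0 b2 h2)
  (H0 : h2 phi0 > h1 phi0) :
  (forall phi, phi0 <= phi -> Rbar_lt (Finite phi) (Rbar_min b1 b2) ->
     normalized v h2 phi > normalized v h1 phi) /\
  (forall phi phi', phi0 < phi' -> phi' < phi -> Rbar_lt (Finite phi) (Rbar_min b1 b2) ->
     normalized v h2 phi / normalized v h1 phi >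
     normalized v h2 phi' / normalized v h1 phi').
Proof.
  set (B := Rbar_min b1 b2).
  assert (H0B : Rbar_lt phi0 B) by (apply Rbar_min_case; [apply Hh1 | apply Hh2]).
  pose proof (ode_solution_restrict _ _ _ _ _ Hh1 H0B (Rbar_min_l b1 b2)) as S1.
  pose proof (ode_solution_restrict _ _ _ _ _ Hh2 H0B (Rbar_min_r b1 b2)) as S2.
  pose proof (ode_solution_comparison v h1 h2 phi0 B S1 S2 H0) as Hlt.
  split.
  - intros phi Hphi HphiB. apply normalized_lt; [apply Hvpos | apply Hlt]; assumption.
  - intros phi phi' Hphi' Hlt' HphiB.
    assert (Hphi'B : Rbar_lt phi' B) by (apply Rle_Rbar_lt_trans with phi; [lra | exact HphiB]).
    destruct (ode_solution_gt0 _ _ _ _ S1 phi') as [Hpos' _]; [lra | exact Hphi'B |].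
    destruct (ode_solution_gt0 _ _ _ _ S1 phi) as [Hpos _]; [lra | exact HphiB |].
    rewrite !normalized_div by (try apply Hvpos; lra).
    apply (ode_solution_ratio_increasing v h1 h2 phi0 B S1 S2); try assumption.
    + intros x Hx _. apply Hvpos. lra.
    + intros x Hx HxB. apply Hlt; [lra | exact HxB].
Qed.
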